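(* Let $\beta\in(1/2,1)$, $r>0$, assume the tail condition (T) and the coupling below, and suppose \[ \max_{q\in(0,1]}\Big(\tfrac{1+q}{2}-\alpha(q,r)-\beta\Big)<0 . \] Fix $t_1\in(0,1/2)$ and let $t_0=n^{-1}$. Then for every $\epsilon>0$ there exists $n_0=n_0(\epsilon)$ such that for all $n\ge n_0$, \[ \sup_{t\in(t_0,t_1)}\sqrt n\,\big|\mathbb E\tilde F^{(1)}(t)-\mathbb E\tilde F^{(0)}(t)\big|\,w(t)\le\epsilon . \]
   Context: $\epsilon_n=n^{-\beta}$. For each $n$ and $i\le n$, $G_{n,i}$ is a probability distribution on $(0,1)$ with $G_{n,i}(t)\ge t$. Tail condition (T): $\alpha:[0,1]\times(0,\infty)\to[0,\infty)$ is continuous, nondecreasing in $q$, nonincreasing in $r$, and there is $\delta_n\to0$ with $|-\log\Pr(X<n^{-q})-\alpha(q,r)\log n|\le\delta_n\log n$ for all $n$, $i\le n$, $q\in(0,1]$, $X\sim G_{n,i}$. Coupling: $I\subset\{1,\dots,n\}$ random with each $i$ included independently with probability $\epsilon_n$; $Q^{(0)}_1,\dots,Q^{(0)}_n$ i.i.d. $\mathrm{Unif}(0,1)$ independent of $I$; for $i\in I$, $Q^{(1)}_i\sim G_{n,i}$ independently of everything else; for $i\notin I$, $Q^{(1)}_i=Q^{(0)}_i$. For $h\in\{0,1\}$, $\tilde F^{(h)}(t)=\frac1n\sum_{i\in I}\mathbf 1(Q^{(h)}_i\le t)$; $\mathbb E$ is unconditional expectation; $w(t)=1/\sqrt{t(1-t)}$.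 *)

From HB Require Import structures.
From mathcomp Require Import all_boot all_order all_algebra.
From mathcomp Require Import all_classical all_reals all_analysis.
Set Implicit Arguments. Unset Strict Implicit. Unset Printing Implicit Defensive.
Import Order.TTheory GRing.Theory Num.Theory.
Import numFieldNormedType.Exports.
Local Open Scope classical_set_scope.
Local Open Scope ring_scope.

Definition mutually_independent {d} {T : measurableType d} {R : realType}
  (P : probability T R) (J : finType) (X : J -> T -> R) : Prop :=
  forall A : J -> set R, (forall j, measurable (A j)) ->
    fine (P (\bigcap_(j in [set: J]) (X j @^-1` A j))) =
    \prod_(j : J) fine (P (X j @^-1` A j)).

Definition cdfG {R : realType} (G : probability R R) (t : R) : R :=
  fine (G [set` `]-oo, t]]).

(* The tail condition (T) for the family G, with exponent profile alpha and
   error sequence delta. (Pr(X < n^-q) must be > 0 for -log to be finite.) *)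
Definition tail_condition {R : realType}
  (G : forall n : nat, 'I_n -> probability R R)
  (alpha : R -> R -> R) (r : R) (delta : nat -> R) : Prop :=
  forall (n : nat) (i : 'I_n) (q : R), (0 < n)%N -> 0 < q <= 1 ->
    let p := fine (G n i [set` `]-oo, (n%:R `^ (- q))[]) in
    0 < p /\
    `| - ln p - alpha q r * ln n%:R | <= delta n * ln n%:R.

Definition Q1 {T : Type} {R : realType} (n : nat) (I : T -> {set 'I_n})
  (Q0 W : 'I_n -> T -> R) (i : 'I_n) (w : T) : R :=
  if i \in I w then W i w else Q0 i w.

Definition Ftilde {T : Type} {R : realType} (n : nat) (I : T -> {set 'I_n})
  (Q : 'I_n -> T -> R) (t : R) (w : T) : R :=
  n%:R^-1 * \sum_(i < n | i \in I w) (Q i w <= t)%R%:R.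

Definition coupling_family {T : Type} {R : realType} (n : nat)
  (I : T -> {set 'I_n}) (Q0 W : 'I_n -> T -> R) :
  ('I_n + 'I_n + 'I_n)%type -> T -> R :=
  fun k => match k with
           | inl (inl i) => fun w => (i \in I w)%:R
           | inl (inr i) => Q0 i
           | inr i => W i
           end.

Definition wt {R : realType} (t : R) : R := (Num.sqrt (t * (1 - t)))^-1.

From HB Require Import structures.
From mathcomp Require Import all_boot all_order all_algebra.
From mathcomp Require Import all_classical all_reals all_analysis.
From mathcomp Require Import measurable_realfun ring lra.
Set Implicit Arguments. Unset Strict Implicit. Unset Printing Implicit Defensive.
Import Order.TTheory GRing.Theory Num.Theory.
Import numFieldNormedType.Exports.
Local Open Scope classical_set_scope.
Local Open Scope ring_scope.

(* By independence of the coupling, for 0 < t < 1,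
        E F~^(1)(t) - E F~^(0)(t) = (1/n) sum_i n^-beta (G_{n,i}(t) - t)
      ([coupling_mean_difference]); each summand is nonnegative.
   2. A uniform estimate of one summand.  With c = min(eta, beta - 1/2) and n
      so large that delta_n <= c/4,
        sqrt(n) n^-beta G(t) w(t) <= 2 n^(-c/4)   for 1/n < t < 1/2
      ([term_bound]).  Writing L = ln n and t = n^-(q+c): if q <= 0 the bound
      G(t) <= 1 suffices since beta - 1/2 >= c; otherwise q is in (0,1] and the
      tail condition gives G(t) <= G(n^-q) <= n^(delta_n - alpha(q,r)), and the
      exponent (1+q)/2 - alpha(q,r) - beta <= -eta does the rest
      ([exponent_choice]).
   Averaging the summand bounds and letting n^(-c/4) -> 0 proves the theorem. *)

Lemma probability_fineK d (T : measurableType d) (R : realType)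
  (P : probability T R) (A : set T) :
  measurable A -> P A = (fine (P A))%:E.
Proof. by move=> mA; rewrite fineK // fin_num_measure. Qed.

Lemma independent_pair d (T : measurableType d) (R : realType) (P : probability T R)
  (J : finType) (X : J -> T -> R) (j1 j2 : J) (A1 A2 : set R) :
  j1 != j2 -> measurable A1 -> measurable A2 -> mutually_independent P X ->
  fine (P (X j1 @^-1` A1 `&` X j2 @^-1` A2)) =
  fine (P (X j1 @^-1` A1)) * fine (P (X j2 @^-1` A2)).
Proof.
move=> j12 mA1 mA2 indep.
have j21 : j2 != j1 by rewrite eq_sym.
pose A j := if j == j1 then A1 else if j == j2 then A2 else setT.
have mA j : measurable (A j) by rewrite /A; case: ifP => //; case: ifP.
have cap : \bigcap_(j in [set: J]) X j @^-1` A j = X j1 @^-1` A1 `&` X j2 @^-1` A2.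
  apply/seteqP; split => w.
    move=> Aw; split; first by have := Aw j1 I; rewrite /A eqxx.
    by have := Aw j2 I; rewrite /A (negbTE j21) eqxx.
  by move=> [w1 w2] j _; rewrite /A; case: ifP => [/eqP->|_] //; case: ifP => [/eqP->|_].
rewrite -cap indep // (bigD1 j1) //= (bigD1 j2) 1?eq_sym //= big1 ?mulr1.
  by rewrite /A eqxx (negbTE j21) eqxx.
move=> j /andP[nj1 nj2].
by rewrite /A (negbTE nj1) (negbTE nj2) preimage_setT probability_setT.
Qed.

Lemma event_indicator_preimage (T : Type) (R : numDomainType) (b : T -> bool) :
  [set w | b w] = (fun w => (b w)%:R : R) @^-1` [set 1].
Proof.
apply/seteqP; split => w /=; rewrite /preimage /=; case: (b w) => //=.
by move/eqP; rewrite eq_sym oner_eq0.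
Qed.

Lemma expectation_Ftilde d (T : measurableType d) (R : realType) (P : probability T R)
  (n : nat) (In : T -> {set 'I_n}) (Q : 'I_n -> T -> R) (t : R) :
  (forall i, measurable ([set w | i \in In w] `&` Q i @^-1` [set` `]-oo, t]])) ->
  ('E_P[Ftilde In Q t])%E = (\sum_(i < n) n%:R^-1 *
     fine (P ([set w | i \in In w] `&` Q i @^-1` [set` `]-oo, t]])))%:E.
Proof.
move=> mS.
pose S i := [set w | i \in In w] `&` Q i @^-1` [set` `]-oo, t]].
have F_sum w :
    (Ftilde In Q t w)%:E = (\sum_(i < n) (n%:R^-1)%:E * (\1_(S i) w)%:E)%E.
  rewrite /Ftilde sumEFin; congr EFin; rewrite big_mkcond mulr_sumr.
  apply: eq_bigr => i _; rewrite indicE.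
  have -> : (w \in S i) = (i \in In w) && (Q i w <= t).
    apply/idP/idP => [/set_mem [/= h1 h2]|/andP[h1 h2]].
      by rewrite h1 /=; move: h2; rewrite /= in_itv.
    by apply/mem_set; split => //=; rewrite in_itv /= h2.
  by case: (i \in In w) => //=; rewrite mulr0.
rewrite unlock; under eq_integral => w _ do rewrite F_sum.
have indic_meas i : measurable_fun setT (fun w => (\1_(S i) w : R)%:E).
  by apply/measurable_EFinP; apply: measurable_indic; exact: mS.
rewrite ge0_integral_sum //; last by move=> i; exact: measurable_funeM.
rewrite -sumEFin; apply: eq_bigr => i _.
rewrite ge0_integralZl // integral_indic; [|exact: measurableT|exact: mS].
by rewrite setIT EFinM -(probability_fineK P (mS i)).
Qed.

Lemma lebesgue_Iic_unit (R : realType) (t : R) : 0 < t < 1 ->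
  lebesgue_measure ([set` `]-oo, t]] `&` [set` `]0, 1[]) = t%:E.
Proof.
move=> /andP[t0 t1].
have -> : [set` `]-oo, t]] `&` [set` `]0, 1[] = [set` `]0, t]].
  apply/seteqP; split => x /=; rewrite !in_itv /=.
    by move=> [xt /andP[x0 _]]; rewrite x0.
  by move=> /andP[x0 xt]; rewrite xt x0 (le_lt_trans xt t1).
by rewrite lebesgue_measure_itv /= lte_fin t0 /= oppr0 addr0.
Qed.

Lemma coupling_mean_difference d (T : measurableType d) (R : realType)
  (P : probability T R) (n : nat) (In : T -> {set 'I_n}) (Q0 W : 'I_n -> T -> R)
  (Gi : 'I_n -> probability R R) (beta t : R) :
  0 < t < 1 ->
  (forall k, measurable_fun setT (coupling_family In Q0 W k)) ->
  mutually_independent P (coupling_family In Q0 W) ->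
  (forall i, P [set w | i \in In w] = ((n%:R : R) `^ (- beta))%:E) ->
  (forall i A, measurable A ->
     P (Q0 i @^-1` A) = lebesgue_measure (A `&` [set` `]0, 1[])) ->
  (forall i A, measurable A -> P (W i @^-1` A) = Gi i A) ->
  fine ('E_P[Ftilde In (Q1 In Q0 W) t])%E - fine ('E_P[Ftilde In Q0 t])%E =
  \sum_(i < n) n%:R^-1 * ((n%:R : R) `^ (- beta) * (cdfG (Gi i) t - t)).
Proof.
move=> t01 mX indep PI PQ0 PW.
pose X := coupling_family In Q0 W.
pose A : set R := [set` `]-oo, t]].
have mA : measurable A by exact: measurable_itv.
have inI i : [set w | i \in In w] = X (inl (inl i)) @^-1` [set 1].
  exact: event_indicator_preimage.
have mXA k B : measurable B -> measurable (X k @^-1` B).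
  by move=> mB; rewrite -[Y in measurable Y]setTI; apply: mX.
have mI i : measurable [set w | i \in In w].
  by rewrite inI; apply: mXA; exact: measurable_set1.
have Q1_on_I i : [set w | i \in In w] `&` Q1 In Q0 W i @^-1` A =
                 [set w | i \in In w] `&` X (inr i) @^-1` A.
  by apply/seteqP; split => w [/= iI Qw]; split => //; move: Qw; rewrite /preimage /= /Q1 iI.
have Q0_on_I i : [set w | i \in In w] `&` Q0 i @^-1` A =
                 [set w | i \in In w] `&` X (inl (inr i)) @^-1` A by [].
rewrite !expectation_Ftilde => [|i|i]; first last.
- by rewrite -/A Q1_on_I; exact: measurableI (mI i) (mXA (inr i) _ mA).
- exact: measurableI (mI i) (mXA (inl (inr i)) _ mA).
rewrite /= -sumrB; apply: eq_bigr => i _; rewrite -mulrBr; congr (_ * _).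
rewrite -/A Q1_on_I Q0_on_I !inI !independent_pair //; try exact: measurable_set1.
rewrite -!inI PI /= -mulrBr; congr (_ * (_ - _)); first by rewrite PW.
by rewrite PQ0 // lebesgue_Iic_unit.
Qed.

Lemma powR_expR (R : realType) (a x : R) : 0 < a -> a `^ x = expR (x * ln a).
Proof. by move=> a0; rewrite /powR gt_eqF. Qed.

Lemma wt_ge0 (R : realType) (t : R) : 0 <= wt t.
Proof. by rewrite /wt invr_ge0 sqrtr_ge0. Qed.

(* ... and on (0, 1/2) it is at most 2 t^(-1/2), since 1 - t >= 1/4 there. *)
Lemma wt_le (R : realType) (t : R) : 0 < t < 1 / 2 -> wt t <= 2 * (Num.sqrt t)^-1.
Proof.
move=> /andP[t0 t12].
have st0 : 0 < Num.sqrt t / 2 by rewrite divr_gt0 ?sqrtr_gt0.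
have lower : Num.sqrt t / 2 <= Num.sqrt (t * (1 - t)).
  rewrite -[X in X <= _]ger0_norm; last exact: ltW.
  rewrite -sqrtr_sqr; apply: ler_wsqrtr.
  rewrite expr_div_n sqr_sqrtr ?ltW //; nra.
by rewrite /wt -invf_div lef_pV2 ?posrE // (lt_le_trans st0 lower).
Qed.

Lemma le_expR_of_ln_bound (R : realType) (p a b : R) :
  0 < p -> `| - ln p - a | <= b -> p <= expR (b - a).
Proof. by move=> p0 /ler_normlP [lo hi]; rewrite -[p]lnK ?posrE // ler_expR; lra. Qed.

(* The exponent bookkeeping of step 2 in logarithmic coordinates L = ln n,
   lam = ln t: an exponent e with g <= e^e that keeps the total exponent of
   sqrt(n) n^-beta g t^(-1/2) below -(c/4) L.  Either t >= n^-c and e = 0, or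
   t < n^-q with q = -(lam + cL)/L in (0,1] and the tail bound applies. *)
Lemma exponent_choice (R : realType) (L lam beta eta c dl g : R) (a : R -> R) :
  0 < L -> - L < lam -> 0 < c -> c <= eta -> c <= beta - 1 / 2 -> dl <= c / 4 ->
  g <= 1 ->
  (forall q, 0 < q <= 1 -> (1 + q) / 2 - a q - beta <= - eta) ->
  (forall q, 0 < q <= 1 -> lam < - (q * L) -> g <= expR ((dl - a q) * L)) ->
  exists e, g <= expR e /\ L / 2 - beta * L + e - lam / 2 <= - (c / 4) * L.
Proof.
move=> L0 lamL c0 ce cb dlc g1 eta_gap tail_est.
have cL0 : 0 < c * L by rewrite mulr_gt0.
have [lam_large | lam_small] := leP (- (c * L)) lam.
  exists 0; split; first by rewrite expR0.
  have : c * L <= (beta - 1 / 2) * L by rewrite ler_pM2r.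
  rewrite mulNr; lra.
pose q := - (lam + c * L) / L.
have qL : q * L = - (lam + c * L) by rewrite /q mulrVK // unitfE gt_eqF.
have q0 : 0 < q by rewrite /q divr_gt0 // oppr_gt0; lra.
have q1 : q <= 1 by rewrite /q ler_pdivrMr // mul1r; lra.
have q01 : 0 < q <= 1 by rewrite q0 q1.
exists ((dl - a q) * L); split; first by apply: tail_est; rewrite // qL; lra.
have h1 : ((1 + q) / 2 - a q - beta) * L <= - eta * L by rewrite ler_pM2r // eta_gap.
have h2 : dl * L <= c / 4 * L by rewrite ler_pM2r.
have h3 : c * L <= eta * L by rewrite ler_pM2r.
have e1 : ((1 + q) / 2 - a q - beta) * L = L / 2 + q * L / 2 - a q * L - beta * L by ring.
rewrite e1 qL in h1.
rewrite mulrBl; lra.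
Qed.

Lemma scaled_term_bound (R : realType) (n : nat) (beta c t g e : R) :
  (0 < n)%N -> 0 < t < 1 / 2 -> 0 <= g -> g <= expR e ->
  ln n%:R / 2 - beta * ln n%:R + e - ln t / 2 <= - (c / 4) * ln n%:R ->
  Num.sqrt n%:R * (n%:R `^ (- beta) * g) * wt t <= 2 * expR (- (c / 4) * ln n%:R).
Proof.
move=> n0 t_range g0 ge He.
have t0 : 0 < t by case/andP: t_range.
have npos : (0 : R) < n%:R by rewrite ltr0n.
have sqrt_expR (x : R) : 0 < x -> Num.sqrt x = expR (2^-1 * ln x).
  by move=> x0; rewrite -powR12_sqrt ?ltW // powR_expR.
have w_bound : wt t <= 2 * expR (- (2^-1 * ln t)) by rewrite expRN -sqrt_expR // wt_le.
rewrite sqrt_expR // powR_expR //.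
apply: (@le_trans _ _ (expR (2^-1 * ln n%:R) * (expR (- beta * ln n%:R) * expR e)
                       * (2 * expR (- (2^-1 * ln t))))).
  apply: ler_pM; rewrite ?mulr_ge0 ?expR_ge0 //.
  - exact: wt_ge0.
  - by rewrite !ler_pM2l ?expR_gt0.
rewrite mulrCA -!expRD ler_pM2l // ler_expR.
by move: He; rewrite mulNr; lra.
Qed.

Lemma cdfG_le1 (R : realType) (G : probability R R) (t : R) : cdfG G t <= 1.
Proof.
rewrite /cdfG -[X in _ <= X]/(fine 1%E); apply: fine_le => //.
  by rewrite fin_num_measure //; exact: measurable_itv.
by apply: probability_le1; exact: measurable_itv.
Qed.

Lemma cdfG_le_open (R : realType) (G : probability R R) (t s : R) :
  t < s -> cdfG G t <= fine (G [set` `]-oo, s[]).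
Proof.
move=> ts; rewrite /cdfG; apply: fine_le; rewrite ?fin_num_measure //;
  try exact: measurable_itv.
apply: le_measure; rewrite ?inE; try exact: measurable_itv.
by move=> x /=; rewrite !in_itv /= => xt; exact: le_lt_trans xt ts.
Qed.

Lemma term_bound (R : realType) (G : probability R R) (n : nat)
  (beta eta c dl t g : R) (a : R -> R) :
  (1 < n)%N -> 0 < c -> c <= eta -> c <= beta - 1 / 2 -> dl <= c / 4 ->
  n%:R^-1 < t < 1 / 2 -> 0 <= g -> g <= cdfG G t ->
  (forall q, 0 < q <= 1 -> (1 + q) / 2 - a q - beta <= - eta) ->
  (forall q, 0 < q <= 1 ->
     let p := fine (G [set` `]-oo, (n%:R `^ (- q))[]) in
     0 < p /\ `| - ln p - a q * ln n%:R | <= dl * ln n%:R) ->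
  Num.sqrt n%:R * (n%:R `^ (- beta) * g) * wt t <= 2 * expR (- (c / 4) * ln n%:R).
Proof.
move=> n1 c0 ce cb dlc /andP[tn t12] g0 gG eta_gap tail_est.
have npos : (0 : R) < n%:R by rewrite ltr0n ltnW.
have L0 : 0 < ln (n%:R : R) by rewrite ln_gt0 // ltr1n.
have t0 : 0 < t by apply: lt_trans tn; rewrite invr_gt0.
have lamL : - ln n%:R < ln t by rewrite -ltr_expR lnK ?posrE // expRN lnK ?posrE.
have tail_cdf q : 0 < q <= 1 -> ln t < - (q * ln n%:R) ->
    cdfG G t <= expR ((dl - a q) * ln n%:R).
  move=> q01 small_t; have [p0 p_est] := tail_est q q01.
  apply: le_trans (@cdfG_le_open R G t (n%:R `^ (- q)) _) _.
    by rewrite powR_expR // -[t]lnK ?posrE // ltr_expR mulNr.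
  by rewrite mulrBl; exact: le_expR_of_ln_bound.
have [e [cdf_e He]] := exponent_choice L0 lamL c0 ce cb dlc (cdfG_le1 G t) eta_gap tail_cdf.
apply: scaled_term_bound He => //; first by rewrite ltnW.
  by rewrite t0.
exact: le_trans cdf_e.
Qed.

Lemma expR_neg_ln_small (R : realType) (a eps : R) : 0 < a -> 0 < eps ->
  exists N : nat, forall n : nat, (N <= n)%N -> expR (- a * ln n%:R) <= eps.
Proof.
move=> a0 eps0; pose M := - ln eps / a.
exists (Num.truncn (expR M)).+1 => n nN.
have nM : expR M < n%:R by apply: lt_le_trans (truncnS_gt _) _; rewrite ler_nat.
have npos : (0 : R) < n%:R by apply: lt_trans nM; rewrite expR_gt0.
have lM : M <= ln n%:R by rewrite -ler_expR lnK ?posrE // ltW.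
rewrite -[eps]lnK ?posrE // ler_expR.
have -> : ln eps = - a * M by rewrite /M; field; rewrite gt_eqF.
by rewrite !mulNr lerN2 ler_pM2l.
Qed.

Lemma average_bound (R : realFieldType) (n : nat) (x : 'I_n -> R) (s w B : R) :
  (0 < n)%N -> 0 <= s -> 0 <= w -> (forall i, 0 <= x i) ->
  (forall i, s * x i * w <= B) ->
  s * `| \sum_(i < n) n%:R^-1 * x i | * w <= B.
Proof.
move=> n0 s0 w0 x0 xB.
have ninv0 : 0 <= n%:R^-1 :> R by rewrite invr_ge0 ler0n.
rewrite ger0_norm; last by apply: sumr_ge0 => i _; rewrite mulr_ge0.
rewrite -mulr_sumr.
set S := \sum_(i < n) x i.
have -> : s * (n%:R^-1 * S) * w = n%:R^-1 * (s * S * w) by ring.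
rewrite /S mulr_sumr mulr_suml.
apply: le_trans (_ : n%:R^-1 * \sum_(i < n) B <= _).
  by apply: ler_wpM2l => //; apply: ler_sum => i _; exact: xB.
by rewrite sumr_const card_ord -[B *+ n]mulr_natl mulrA mulVf ?mul1r // pnatr_eq0 -lt0n.
Qed.

Theorem lemma12 (R : realType) (beta r : R)
  (alpha : R -> R -> R) (delta : nat -> R)
  (G : forall n : nat, 'I_n -> probability R R)
  (d : measure_display) (T : nat -> measurableType d)
  (P : forall n : nat, probability (T n) R)
  (I : forall n : nat, T n -> {set 'I_n})
  (Q0 W : forall n : nat, 'I_n -> T n -> R)
  (t1 : R) :
  (* parameters *)
  1 / 2 < beta < 1 -> 0 < r ->
  (* the laws G_{n,i}: probabilities on (0,1) with G(t) >= t *)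
  (forall n (i : 'I_n), G n i [set` `]0, 1[] = 1%E) ->
  (forall n (i : 'I_n) (t : R), 0 < t < 1 -> t <= cdfG (G n i) t) ->
  (* properties of alpha *)
  {within [set p : R * R | 0 <= p.1 <= 1 /\ 0 < p.2],
     continuous (fun p : R * R => alpha p.1 p.2)} ->
  (forall q r', 0 <= q <= 1 -> 0 < r' -> 0 <= alpha q r') ->
  (forall q q' r', 0 <= q <= 1 -> 0 <= q' <= 1 -> 0 < r' -> q <= q' ->
     alpha q r' <= alpha q' r') ->
  (forall q r' r'', 0 <= q <= 1 -> 0 < r' -> 0 < r'' -> r' <= r'' ->
     alpha q r'' <= alpha q r') ->
  (* tail condition (T) *)
  delta @ \oo --> 0 ->
  tail_condition G alpha r delta ->
  (* max_{q in (0,1]} ((1+q)/2 - alpha(q,r) - beta) < 0 *)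
  (exists eta : R, 0 < eta /\
     forall q : R, 0 < q <= 1 -> (1 + q) / 2 - alpha q r - beta <= - eta) ->
  (* coupling, for every n >= 1 *)
  (forall n (k : 'I_n + 'I_n + 'I_n),
     measurable_fun setT (coupling_family (I n) (Q0 n) (W n) k)) ->
  (forall n, (0 < n)%N ->
     mutually_independent (P n) (coupling_family (I n) (Q0 n) (W n))) ->
  (forall n (i : 'I_n), (0 < n)%N ->
     P n [set w | i \in I n w] = ((n%:R : R) `^ (- beta))%:E) ->
  (forall n (i : 'I_n) (A : set R), (0 < n)%N -> measurable A ->
     P n (Q0 n i @^-1` A) = lebesgue_measure (A `&` [set` `]0, 1[])) ->
  (forall n (i : 'I_n) (A : set R), (0 < n)%N -> measurable A ->
     P n (W n i @^-1` A) = G n i A) ->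
  0 < t1 < 1 / 2 ->
  forall eps : R, 0 < eps ->
  exists n0 : nat, forall n : nat, (n0 <= n)%N -> (0 < n)%N ->
    forall t : R, (n%:R)^-1 < t < t1 ->
      Num.sqrt n%:R *
        `| fine ('E_(P n)[Ftilde (I n) (Q1 (I n) (Q0 n) (W n)) t])
         - fine ('E_(P n)[Ftilde (I n) (Q0 n) t]) | * wt t <= eps.
Proof.
move=> /andP[half_lt_beta _] _ _ G_ge_id _ _ _ _ delta0 tail [eta [eta0 eta_gap]]
  mX indep PI PQ0 PW /andP[_ t1_small] eps eps0.
pose c := Num.min eta (beta - 1 / 2).
have c0 : 0 < c by rewrite /c lt_min eta0 subr_gt0.
have [ce cb] : c <= eta /\ c <= beta - 1 / 2 by apply/andP; rewrite -le_min.
have c4 : 0 < c / 4 by rewrite divr_gt0.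
have /cvgr0_norm_le/(_ _ c4) [N1 _ delta_small] := delta0.
have [N2 decay_small] := expR_neg_ln_small c4 (divr_gt0 eps0 (ltr0n R 2)).
exists (maxn (maxn N1 N2) 2) => n; rewrite !geq_max => /andP[/andP[nN1 nN2] n2] n0.
move=> t /andP[tn tt1].
have t_small : t < 1 / 2 by exact: lt_trans tt1 t1_small.
have t0 : 0 < t by apply: lt_trans tn; rewrite invr_gt0 ltr0n.
have t01 : 0 < t < 1 by rewrite t0 (lt_trans t_small) //; lra.
rewrite (coupling_mean_difference t01 (mX n) (indep n n0) (fun i => PI n i n0)
  (fun i A => PQ0 n i A n0) (fun i A => PW n i A n0)).
apply: average_bound => //; [exact: wt_ge0 | move=> i |].
  by rewrite mulr_ge0 ?powR_ge0 // subr_ge0 G_ge_id.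
move=> i; apply: le_trans (_ : 2 * expR (- (c / 4) * ln n%:R) <= _); last first.
  by have := decay_small n nN2; lra.
apply: (term_bound (G := G n i) (eta := eta) (a := alpha^~ r) (dl := delta n)) => //.
- exact: le_trans (ler_norm _) (delta_small n nN1).
- by rewrite tn.
- by rewrite subr_ge0 G_ge_id.
- by rewrite lerBlDr lerDl ltW.
- by move=> q q01; exact: tail.
Qed.
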